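(* Let $n\ge 2$ and let $f:(\mathbb{C}^n,0)\to(\mathbb{C},0)$ be a holomorphic function germ with $f(0)=0$ having an isolated critical point at the origin, with Milnor number $\mu$ and Tjurina number $\tau$. If $\mu/\tau>n-1$, then $f^{n-1}\notin J_f$.
   Context: Let $S=\mathbb{C}\{x_1,\dots,x_n\}$ be the ring of convergent power series, $J_f=(\partial f/\partial x_1,\dots,\partial f/\partial x_n)\subset S$ the Jacobian ideal, $\mu=\dim_{\mathbb{C}}S/J_f$ and $\tau=\dim_{\mathbb{C}}S/(J_f,f)$. *)

From Stdlib Require Import Reals List Arith.
Import ListNotations.
Open Scope R_scope.

Record C := mkC { re : R; im : R }.
Definition C0 : C := mkC 0 0.
Definition C1 : C := mkC 1 0.
Definition Cadd (a b : C) : C := mkC (re a + re b) (im a + im b).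
Definition Copp (a : C) : C := mkC (- re a) (- im a).
Definition Cmul (a b : C) : C :=
  mkC (re a * re b - im a * im b) (re a * im b + im a * re b).
Definition Cabs (a : C) : R := sqrt (re a * re a + im a * im a).
Definition CofN (k : nat) : C := mkC (INR k) 0.
Definition Csum (l : list C) : C := fold_right Cadd C0 l.

(** A power series in n variables is its coefficient function; only the values
    at multi-indices of length n are meaningful. *)
Definition mindex := list nat.
Definition series := mindex -> C.

Definition mdeg (a : mindex) : nat := fold_right plus 0%nat a.

Fixpoint boxes (a : mindex) : list mindex :=
  match a with
  | [] => [[]]
  | k :: a' => flat_map (fun j => map (cons j) (boxes a')) (seq 0 (S k))
  end.

Fixpoint msub (a b : mindex) : mindex :=
  match a, b with
  | x :: a', y :: b' => (x - y)%nat :: msub a' b'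
  | _, _ => a
  end.

Definition is_zero_mi (a : mindex) : bool := forallb (Nat.eqb 0) a.

Fixpoint mincr (i : nat) (a : mindex) : mindex :=
  match a, i with
  | [], _ => []
  | x :: a', O => S x :: a'
  | x :: a', S i' => x :: mincr i' a'
  end.

Definition munit (n i : nat) : mindex := mincr i (repeat 0%nat n).

Definition sadd (f g : series) : series := fun a => Cadd (f a) (g a).
Definition sopp (f : series) : series := fun a => Copp (f a).
Definition sscale (c : C) (f : series) : series := fun a => Cmul c (f a).
Definition smul (f g : series) : series :=
  fun a => Csum (map (fun b => Cmul (f b) (g (msub a b))) (boxes a)).
Definition sone : series := fun a => if is_zero_mi a then C1 else C0.
Definition szero : series := fun _ => C0.
Fixpoint spow (f : series) (k : nat) : series :=
  match k with O => sone | S k' => smul f (spow f k') end.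

(** partial derivative d/dx_i (i counted from 0) *)
Definition sderiv (i : nat) (f : series) : series :=
  fun a => Cmul (CofN (S (nth i a 0%nat))) (f (mincr i a)).

Definition seq_eq (n : nat) (f g : series) : Prop :=
  forall a : mindex, length a = n -> f a = g a.

(** convergence: the series converges on some polydisc of radius r > 0,
    i.e. its coefficients satisfy a Cauchy estimate |a_alpha| r^|alpha| <= M *)
Definition convergent (n : nat) (f : series) : Prop :=
  exists M r : R, 0 < r /\
    forall a : mindex, length a = n -> Cabs (f a) * r ^ (mdeg a) <= M.

Definition in_ideal (n : nat) (gens : list series) (g : series) : Prop :=
  exists hs : list series,
    length hs = length gens /\ Forall (convergent n) hs /\
    seq_eq n g (fold_right sadd szero (map (fun p => smul (fst p) (snd p)) (combine hs gens))).

Definition lincomb (cs : list C) (es : list series) : series :=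
  fold_right sadd szero (map (fun p => sscale (fst p) (snd p)) (combine cs es)).

Definition quot_dim (n : nat) (gens : list series) (d : nat) : Prop :=
  exists es : list series,
    length es = d /\ Forall (convergent n) es /\
    (forall g, convergent n g ->
       exists cs : list C, length cs = d /\
         in_ideal n gens (sadd g (sopp (lincomb cs es)))) /\
    (forall cs : list C, length cs = d ->
       in_ideal n gens (lincomb cs es) -> Forall (fun c => c = C0) cs).

Definition jacobian_gens (n : nat) (f : series) : list series :=
  map (fun i => sderiv i f) (seq 0 n).
Definition tjurina_gens (n : nat) (f : series) : list series :=
  f :: jacobian_gens n f.

Definition milnor_number (n : nat) (f : series) (mu : nat) : Prop :=
  quot_dim n (jacobian_gens n f) mu.
Definition tjurina_number (n : nat) (f : series) (tau : nat) : Prop :=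
  quot_dim n (tjurina_gens n f) tau.

(** origin is a critical point: f(0)=0 handled separately; all first partials vanish at 0 *)
Definition critical_at_origin (n : nat) (f : series) : Prop :=
  forall i : nat, (i < n)%nat -> f (munit n i) = C0.

(** isolated critical point at 0 (for a convergent germ with 0 critical):
    the Milnor algebra S/J_f is finite dimensional *)
Definition isolated_critical_point (n : nat) (f : series) : Prop :=
  critical_at_origin n f /\ exists mu : nat, milnor_number n f mu.

(* Let t_1..t_tau span S/(J_f, f). Any g is congruent mod J_f to sum c_i t_i + h f, and
   applying this again to h, k times, shows that the f^l t_i (l < k) span S/J_f modulo
   f^k S. So if f^(n-1) lies in J_f, then mu <= (n-1) tau, contradicting mu/tau > n-1. *)

From Stdlib Require Import Reals List Lra Lia FunctionalExtensionality Classical.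
Import ListNotations.
Open Scope R_scope.

Lemma C_ext (a b : C) : re a = re b -> im a = im b -> a = b.
Proof. destruct a, b; simpl; intros; subst; reflexivity. Qed.

Definition Csub (a b : C) : C := Cadd a (Copp b).

Lemma C_ring : ring_theory C0 C1 Cadd Cmul Csub Copp (@eq C).
Proof.
  constructor; intros; apply C_ext; destruct x; try destruct y; try destruct z;
  unfold Cadd, Cmul, Csub, Copp, C0, C1; simpl; ring.
Qed.
Add Ring Cring : C_ring.

Definition Cinv (p : C) : C :=
  mkC (re p / (re p * re p + im p * im p)) (- im p / (re p * re p + im p * im p)).

Lemma Cinv_l p : p <> C0 -> Cmul (Cinv p) p = C1.
Proof.
  intro Hp. assert (Hd : re p * re p + im p * im p <> 0).
  { intro E. apply Hp. destruct p; unfold C0; simpl in *. f_equal; nra. }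
  apply C_ext; unfold Cinv, Cmul, C1; simpl; field; auto.
Qed.

Lemma C1_neq_C0 : C1 <> C0.
Proof. unfold C1, C0. intro E; injection E; lra. Qed.

Lemma Csum_app l1 l2 : Csum (l1 ++ l2) = Cadd (Csum l1) (Csum l2).
Proof. induction l1; simpl; [ring | rewrite IHl1; ring]. Qed.

Lemma Csum_flat_map {A B} (h : A -> list B) (F : B -> C) l :
  Csum (map F (flat_map h l)) = Csum (map (fun x => Csum (map F (h x))) l).
Proof. induction l; simpl; auto. rewrite map_app, Csum_app, IHl; auto. Qed.

Lemma Csum_map_add {A} (F G : A -> C) l :
  Csum (map (fun x => Cadd (F x) (G x)) l) = Cadd (Csum (map F l)) (Csum (map G l)).
Proof. induction l; simpl; [ring | rewrite IHl; ring]. Qed.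

Lemma Csum_map_mull {A} c (F : A -> C) l :
  Csum (map (fun x => Cmul c (F x)) l) = Cmul c (Csum (map F l)).
Proof. induction l; simpl; [ring | rewrite IHl; ring]. Qed.

Lemma Csum_map_mulr {A} c (F : A -> C) l :
  Csum (map (fun x => Cmul (F x) c) l) = Cmul (Csum (map F l)) c.
Proof. induction l; simpl; [ring | rewrite IHl; ring]. Qed.

Lemma Csum_map_ext_in {A} (F G : A -> C) l :
  (forall x, In x l -> F x = G x) -> Csum (map F l) = Csum (map G l).
Proof. intro H; f_equal; apply map_ext_in; auto. Qed.

Lemma Csum_map_zero {A} (F : A -> C) l :
  (forall x, In x l -> F x = C0) -> Csum (map F l) = C0.
Proof. induction l; simpl; intros; auto. rewrite H, IHl; auto. ring. Qed.

Lemma Csum_exchange {A B} (H : A -> B -> C) l1 l2 :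
  Csum (map (fun x => Csum (map (fun y => H x y) l2)) l1) =
  Csum (map (fun y => Csum (map (fun x => H x y) l1)) l2).
Proof.
  induction l1; simpl.
  - symmetry; apply Csum_map_zero; auto.
  - rewrite IHl1, <- Csum_map_add. reflexivity.
Qed.

(* The sum includes [F k]. *)
Definition Csum_upto (k : nat) (F : nat -> C) : C := Csum (map F (seq 0 (S k))).

Lemma Csum_upto_Sl k F :
  Csum_upto (S k) F = Cadd (F 0%nat) (Csum_upto k (fun j => F (S j))).
Proof. unfold Csum_upto. cbn [seq map Csum]. rewrite <- seq_shift, map_map. reflexivity. Qed.

Lemma Csum_upto_Sr k F : Csum_upto (S k) F = Cadd (Csum_upto k F) (F (S k)).
Proof. unfold Csum_upto. rewrite seq_S, map_app, Csum_app. simpl. ring. Qed.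

Lemma Csum_upto_ext k F G :
  (forall j, (j <= k)%nat -> F j = G j) -> Csum_upto k F = Csum_upto k G.
Proof.
  intro H; apply Csum_map_ext_in; intros x Hx; apply in_seq in Hx; apply H; lia.
Qed.

Lemma Csum_upto_add k F G :
  Csum_upto k (fun j => Cadd (F j) (G j)) = Cadd (Csum_upto k F) (Csum_upto k G).
Proof. apply Csum_map_add. Qed.

Lemma Csum_upto_rev k F : Csum_upto k (fun j => F (k - j)%nat) = Csum_upto k F.
Proof.
  induction k as [|k IH]; [reflexivity|].
  rewrite Csum_upto_Sl, Csum_upto_Sr, Nat.sub_0_r.
  change (Csum_upto k (fun j => F (S k - S j)%nat)) with (Csum_upto k (fun j => F (k - j)%nat)).
  rewrite IH; ring.
Qed.

(* Both sides sum [T j i l] over [j + i + l = k]; the right side groups by [m = j + i]. *)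
Lemma Csum_upto_triangle k (T : nat -> nat -> nat -> C) :
  Csum_upto k (fun j => Csum_upto (k - j) (fun i => T j i (k - j - i)%nat)) =
  Csum_upto k (fun m => Csum_upto m (fun j => T j (m - j)%nat (k - m)%nat)).
Proof.
  revert T; induction k as [|k IH]; intro T; [reflexivity|].
  rewrite !Csum_upto_Sl. simpl (S k - 0)%nat.
  change (Csum_upto k (fun j => Csum_upto (S k - S j) (fun i => T (S j) i (S k - S j - i)%nat)))
    with (Csum_upto k (fun j => Csum_upto (k - j) (fun i => T (S j) i (k - j - i)%nat))).
  rewrite (IH (fun j => T (S j))).
  rewrite (Csum_upto_ext k (fun j => Csum_upto (S j) (fun i => T i (S j - i)%nat (S k - S j)%nat))
     (fun j => Cadd (T 0%nat (S j) (k - j)%nat)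
                    (Csum_upto j (fun i => T (S i) (j - i)%nat (k - j)%nat)))).
  2:{ intros j _. apply Csum_upto_Sl. }
  rewrite Csum_upto_add, Csum_upto_Sl.
  change (Csum_upto 0 (fun j => T j (0 - j)%nat (S k))) with (Cadd (T 0%nat 0%nat (S k)) C0).
  change (fun j => T 0%nat (S j) (S k - S j)%nat) with (fun j => T 0%nat (S j) (k - j)%nat).
  rewrite Nat.sub_0_r. ring.
Qed.

(* [f = sum_j x_1^j (slice f j)]. *)
Definition slice (f : series) (j : nat) : series := fun b => f (j :: b).

Lemma smul_nil f g : smul f g [] = Cmul (f []) (g []).
Proof. unfold smul. simpl. ring. Qed.

Lemma smul_cons f g k a :
  smul f g (k :: a) = Csum_upto k (fun j => smul (slice f j) (slice g (k - j)) a).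
Proof.
  unfold smul at 1. cbn [boxes]. rewrite Csum_flat_map.
  apply Csum_map_ext_in. intros j _. rewrite map_map. reflexivity.
Qed.

Lemma boxes_length_in a b :
  In b (boxes a) -> length b = length a /\ length (msub a b) = length a.
Proof.
  revert b; induction a as [|k a IH]; intros b Hb; cbn [boxes] in Hb.
  - destruct Hb as [<-|[]]; auto.
  - apply in_flat_map in Hb as [j [_ Hj]]. apply in_map_iff in Hj as [b' [<- Hb']].
    destruct (IH _ Hb'); simpl; auto.
Qed.

Lemma boxes_mdeg a b : In b (boxes a) -> (mdeg b + mdeg (msub a b))%nat = mdeg a.
Proof.
  revert b; induction a as [|k a IH]; intros b Hb; cbn [boxes] in Hb.
  - destruct Hb as [<-|[]]; auto.
  - apply in_flat_map in Hb as [j [Hj Hj']]. apply in_map_iff in Hj' as [b' [<- Hb']].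
    apply in_seq in Hj. specialize (IH _ Hb'). simpl. lia.
Qed.

Lemma boxes_length_le a : (length (boxes a) <= 2 ^ mdeg a)%nat.
Proof.
  induction a as [|k a IH]; cbn [boxes mdeg fold_right]; auto.
  assert (Hflat : forall l, length (flat_map (fun j => map (cons j) (boxes a)) l)
                            = (length l * length (boxes a))%nat).
  { induction l; simpl; auto. rewrite length_app, length_map, IHl. reflexivity. }
  rewrite Hflat, length_seq, Nat.pow_add_r.
  apply Nat.mul_le_mono; auto.
  clear. induction k; simpl; lia.
Qed.

Lemma smul_comm_at f g a : smul f g a = smul g f a.
Proof.
  revert f g; induction a as [|k a IH]; intros f g.
  - rewrite !smul_nil; ring.
  - rewrite !smul_cons.
    rewrite (Csum_upto_ext k _ (fun j => smul (slice g (k - j)) (slice f (k - (k - j))) a)).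
    2:{ intros j Hj. rewrite IH. do 3 f_equal. lia. }
    apply (Csum_upto_rev k (fun i => smul (slice g i) (slice f (k - i)) a)).
Qed.

Lemma smul_sum_r {A} f (G : A -> series) l a :
  smul f (fun b => Csum (map (fun i => G i b) l)) a = Csum (map (fun i => smul f (G i) a) l).
Proof.
  unfold smul. rewrite <- Csum_exchange. apply Csum_map_ext_in; intros.
  rewrite <- Csum_map_mull. reflexivity.
Qed.

Lemma smul_sum_l {A} (G : A -> series) h l a :
  smul (fun b => Csum (map (fun i => G i b) l)) h a = Csum (map (fun i => smul (G i) h a) l).
Proof.
  unfold smul. rewrite <- Csum_exchange. apply Csum_map_ext_in; intros.
  rewrite <- Csum_map_mulr. reflexivity.
Qed.

Lemma slice_smul f g m :
  slice (smul f g) m = fun b => Csum_upto m (fun i => smul (slice f i) (slice g (m - i)) b).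
Proof. apply functional_extensionality; intro b. apply smul_cons. Qed.

Lemma smul_assoc_at f g h a : smul f (smul g h) a = smul (smul f g) h a.
Proof.
  revert f g h; induction a as [|k a IH]; intros f g h.
  - rewrite !smul_nil; ring.
  - rewrite !smul_cons.
    rewrite (Csum_upto_ext k _ (fun j => Csum_upto (k - j) (fun i =>
        smul (smul (slice f j) (slice g i)) (slice h (k - j - i)) a))).
    2:{ intros j _. rewrite slice_smul. unfold Csum_upto at 1. rewrite smul_sum_r.
        apply Csum_map_ext_in. intros i _. apply IH. }
    rewrite (Csum_upto_triangle k (fun j i l => smul (smul (slice f j) (slice g i)) (slice h l) a)).
    apply Csum_upto_ext. intros m _. rewrite slice_smul. unfold Csum_upto at 2.
    rewrite smul_sum_l. reflexivity.
Qed.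

Lemma smul_one_l g a : smul sone g a = g a.
Proof.
  revert g; induction a as [|k a IH]; intro g.
  - rewrite smul_nil. unfold sone. simpl. ring.
  - rewrite smul_cons. destruct k.
    + unfold Csum_upto. simpl. change (slice sone 0) with sone. rewrite IH. unfold slice. ring.
    + rewrite Csum_upto_Sl, (Csum_upto_ext k _ (fun _ => C0)).
      2:{ intros j _. unfold smul. apply Csum_map_zero. intros. unfold slice, sone. simpl. ring. }
      unfold Csum_upto at 1; rewrite (Csum_map_zero (fun _ => C0)) by auto.
      simpl. change (slice sone 0) with sone. rewrite IH. unfold slice. ring.
Qed.

Definition ssub (f g : series) : series := sadd f (sopp g).

Lemma series_ring : ring_theory szero sone sadd smul ssub sopp (@eq series).
Proof.
  constructor; intros; apply functional_extensionality; intro a;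
  unfold sadd, ssub, sopp, szero; try ring.
  - apply smul_one_l.
  - apply smul_comm_at.
  - apply smul_assoc_at.
  - unfold smul. rewrite <- Csum_map_add. apply Csum_map_ext_in; intros; ring.
  - reflexivity.
Qed.
Add Ring Sring : series_ring.

(* The l1-norm is within a factor 2 of [Cabs] and avoids square roots. *)
Definition Cnorm1 (a : C) : R := Rabs (re a) + Rabs (im a).

Lemma Cnorm1_ge0 a : 0 <= Cnorm1 a.
Proof. unfold Cnorm1. pose proof (Rabs_pos (re a)); pose proof (Rabs_pos (im a)); lra. Qed.

Lemma Cabs_le_Cnorm1 a : Cabs a <= Cnorm1 a.
Proof.
  unfold Cabs, Cnorm1. pose proof (Rabs_pos (re a)); pose proof (Rabs_pos (im a)).
  rewrite <- (sqrt_square (Rabs (re a) + Rabs (im a))) by lra.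
  apply sqrt_le_1_alt. pose proof (Rsqr_abs (re a)); pose proof (Rsqr_abs (im a)).
  unfold Rsqr in *. nra.
Qed.

Lemma Cnorm1_le_Cabs a : Cnorm1 a <= 2 * Cabs a.
Proof.
  unfold Cabs, Cnorm1.
  assert (H1 : Rabs (re a) <= sqrt (re a * re a + im a * im a)).
  { rewrite <- sqrt_Rsqr_abs. apply sqrt_le_1_alt. unfold Rsqr. nra. }
  assert (H2 : Rabs (im a) <= sqrt (re a * re a + im a * im a)).
  { rewrite <- sqrt_Rsqr_abs. apply sqrt_le_1_alt. unfold Rsqr. nra. }
  lra.
Qed.

Lemma Cnorm1_add a b : Cnorm1 (Cadd a b) <= Cnorm1 a + Cnorm1 b.
Proof.
  unfold Cnorm1, Cadd; simpl.
  pose proof (Rabs_triang (re a) (re b)); pose proof (Rabs_triang (im a) (im b)). lra.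
Qed.

Lemma Cnorm1_mul a b : Cnorm1 (Cmul a b) <= Cnorm1 a * Cnorm1 b.
Proof.
  unfold Cnorm1, Cmul; simpl.
  pose proof (Rabs_triang (re a * re b) (- (im a * im b))).
  pose proof (Rabs_triang (re a * im b) (im a * re b)).
  rewrite Rabs_Ropp in H. rewrite !Rabs_mult in H, H0.
  pose proof (Rabs_pos (re a)); pose proof (Rabs_pos (im a));
  pose proof (Rabs_pos (re b)); pose proof (Rabs_pos (im b)). unfold Rminus. nra.
Qed.

Lemma Cnorm1_Csum {A} (F : A -> C) l B :
  (forall x, In x l -> Cnorm1 (F x) <= B) -> Cnorm1 (Csum (map F l)) <= INR (length l) * B.
Proof.
  induction l as [|x l IH]; intro H.
  - unfold Cnorm1; simpl. rewrite Rabs_R0. lra.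
  - change (Csum (map F (x :: l))) with (Cadd (F x) (Csum (map F l))).
    change (length (x :: l)) with (S (length l)). rewrite S_INR.
    eapply Rle_trans; [apply Cnorm1_add|].
    assert (Cnorm1 (F x) <= B) by (apply H; left; auto).
    assert (Cnorm1 (Csum (map F l)) <= INR (length l) * B) by (apply IH; intros; apply H; right; auto).
    rewrite Rmult_plus_distr_r. lra.
Qed.

Definition cauchy_bound (n : nat) (f : series) (M r : R) : Prop :=
  forall a : mindex, length a = n -> Cnorm1 (f a) * r ^ mdeg a <= M.

Lemma convergent_iff_cauchy_bound n f :
  convergent n f <-> exists M r, 0 < r /\ cauchy_bound n f M r.
Proof.
  split; intros [M [r [Hr H]]].
  - exists (2 * M), r; split; auto. intros a Ha. specialize (H a Ha).
    pose proof (Cnorm1_le_Cabs (f a)). pose proof (pow_le r (mdeg a) (Rlt_le _ _ Hr)). nra.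
  - exists M, r; split; auto. intros a Ha. specialize (H a Ha).
    pose proof (Cabs_le_Cnorm1 (f a)). pose proof (pow_le r (mdeg a) (Rlt_le _ _ Hr)). nra.
Qed.

Lemma cauchy_bound_ge0 n f M r : 0 < r -> cauchy_bound n f M r -> 0 <= M.
Proof.
  intros Hr H. specialize (H (repeat 0%nat n) (repeat_length _ _)).
  pose proof (Cnorm1_ge0 (f (repeat 0%nat n))).
  pose proof (pow_le r (mdeg (repeat 0%nat n)) (Rlt_le _ _ Hr)). nra.
Qed.

Lemma cauchy_bound_shrink n f M r r' :
  0 < r' <= r -> cauchy_bound n f M r -> cauchy_bound n f M r'.
Proof.
  intros Hr H a Ha. specialize (H a Ha). pose proof (Cnorm1_ge0 (f a)).
  assert (r' ^ mdeg a <= r ^ mdeg a) by (apply pow_incr; lra). nra.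
Qed.

Lemma cauchy_bound_common_radius n f g :
  convergent n f -> convergent n g ->
  exists M1 M2 r, 0 < r /\ cauchy_bound n f M1 r /\ cauchy_bound n g M2 r.
Proof.
  rewrite !convergent_iff_cauchy_bound. intros [M1 [r1 [H1 B1]]] [M2 [r2 [H2 B2]]].
  assert (Hr : 0 < Rmin r1 r2) by (apply Rmin_glb_lt; auto).
  exists M1, M2, (Rmin r1 r2); split; [auto | split].
  - apply (cauchy_bound_shrink n f M1 r1); [split; [auto | apply Rmin_l] | auto].
  - apply (cauchy_bound_shrink n g M2 r2); [split; [auto | apply Rmin_r] | auto].
Qed.

Lemma convergent_add n f g : convergent n f -> convergent n g -> convergent n (sadd f g).
Proof.
  intros Cf Cg. destruct (cauchy_bound_common_radius n f g Cf Cg) as [M1 [M2 [r [Hr [B1 B2]]]]].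
  apply convergent_iff_cauchy_bound. exists (M1 + M2), r; split; auto.
  intros a Ha. specialize (B1 a Ha); specialize (B2 a Ha). unfold sadd.
  pose proof (Cnorm1_add (f a) (g a)). pose proof (pow_le r (mdeg a) (Rlt_le _ _ Hr)). nra.
Qed.

Lemma convergent_scale n c f : convergent n f -> convergent n (sscale c f).
Proof.
  rewrite !convergent_iff_cauchy_bound. intros [M [r [H B]]].
  exists (Cnorm1 c * M), r; split; auto. intros a Ha.
  unfold sscale. pose proof (Cnorm1_mul c (f a)). specialize (B a Ha).
  pose proof (Cnorm1_ge0 c). pose proof (Cnorm1_ge0 (f a)).
  pose proof (pow_le r (mdeg a) (Rlt_le _ _ H)). nra.
Qed.

Lemma convergent_zero n : convergent n szero.
Proof.
  apply convergent_iff_cauchy_bound. exists 0, 1; split; [lra|].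
  intros a _. unfold szero, Cnorm1; simpl. rewrite Rabs_R0. lra.
Qed.

Lemma convergent_one n : convergent n sone.
Proof.
  apply convergent_iff_cauchy_bound. exists 1, 1; split; [lra|].
  intros a _. rewrite pow1. unfold sone.
  destruct (is_zero_mi a); unfold Cnorm1; simpl; rewrite ?Rabs_R0, ?Rabs_R1; lra.
Qed.

(* Each of the at most [2^|a|] terms of [(f g)_a] is bounded by [M1 M2 / r^|a|]. *)
Lemma cauchy_bound_smul n f g M1 M2 r a :
  0 < r -> cauchy_bound n f M1 r -> cauchy_bound n g M2 r -> length a = n ->
  Cnorm1 (smul f g a) * r ^ mdeg a <= 2 ^ mdeg a * (M1 * M2).
Proof.
  intros Hr B1 B2 Ha. unfold smul.
  pose proof (pow_lt r (mdeg a) Hr) as Hpow.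
  assert (Hsum : Cnorm1 (Csum (map (fun b => Cmul (f b) (g (msub a b))) (boxes a)))
                 <= INR (length (boxes a)) * (M1 * M2 / r ^ mdeg a)).
  { apply Cnorm1_Csum. intros b Hb. destruct (boxes_length_in a b Hb) as [L1 L2].
    specialize (B1 b ltac:(congruence)). specialize (B2 (msub a b) ltac:(congruence)).
    eapply Rle_trans; [apply Cnorm1_mul|].
    apply (Rmult_le_reg_r (r ^ mdeg a)); auto.
    replace (M1 * M2 / r ^ mdeg a * r ^ mdeg a) with (M1 * M2) by (field; lra).
    rewrite <- (boxes_mdeg a b Hb), pow_add.
    pose proof (Cnorm1_ge0 (f b)); pose proof (Cnorm1_ge0 (g (msub a b))).
    pose proof (pow_le r (mdeg b) (Rlt_le _ _ Hr)).
    pose proof (pow_le r (mdeg (msub a b)) (Rlt_le _ _ Hr)).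
    replace (Cnorm1 (f b) * Cnorm1 (g (msub a b)) * (r ^ mdeg b * r ^ mdeg (msub a b)))
      with ((Cnorm1 (f b) * r ^ mdeg b) * (Cnorm1 (g (msub a b)) * r ^ mdeg (msub a b))) by ring.
    apply Rmult_le_compat; auto; apply Rmult_le_pos; auto. }
  assert (HL : INR (length (boxes a)) <= 2 ^ mdeg a).
  { replace 2 with (INR 2) by (simpl; ring). rewrite <- pow_INR. apply le_INR, boxes_length_le. }
  pose proof (cauchy_bound_ge0 n f M1 r Hr B1). pose proof (cauchy_bound_ge0 n g M2 r Hr B2).
  assert (0 <= M1 * M2 / r ^ mdeg a) by (apply Rmult_le_pos; [nra | left; apply Rinv_0_lt_compat; auto]).
  replace (2 ^ mdeg a * (M1 * M2)) with (2 ^ mdeg a * (M1 * M2 / r ^ mdeg a) * r ^ mdeg a)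
    by (field; lra).
  apply Rmult_le_compat_r; [lra|].
  eapply Rle_trans; [exact Hsum|]. apply Rmult_le_compat_r; auto.
Qed.

Lemma convergent_mul n f g : convergent n f -> convergent n g -> convergent n (smul f g).
Proof.
  intros Cf Cg. destruct (cauchy_bound_common_radius n f g Cf Cg) as [M1 [M2 [r [Hr [B1 B2]]]]].
  apply convergent_iff_cauchy_bound. exists (M1 * M2), (r / 2); split; [lra|].
  intros a Ha. pose proof (cauchy_bound_smul n f g M1 M2 r a Hr B1 B2 Ha).
  pose proof (pow_lt 2 (mdeg a) ltac:(lra)).
  unfold Rdiv. rewrite Rpow_mult_distr, pow_inv.
  apply (Rmult_le_reg_r (2 ^ mdeg a)); auto.
  replace (Cnorm1 (smul f g a) * (r ^ mdeg a * / 2 ^ mdeg a) * 2 ^ mdeg a)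
    with (Cnorm1 (smul f g a) * r ^ mdeg a) by (field; lra).
  lra.
Qed.

Lemma convergent_pow n f k : convergent n f -> convergent n (spow f k).
Proof. intro H; induction k; simpl; [apply convergent_one | apply convergent_mul; auto]. Qed.

Definition sconst (c : C) : series := sscale c sone.

Lemma sscale_sconst c f : sscale c f = smul (sconst c) f.
Proof.
  apply functional_extensionality; intro a. unfold sconst.
  transitivity (Cmul c (smul sone f a)); [rewrite smul_one_l; reflexivity|].
  unfold smul, sscale. rewrite <- Csum_map_mull. apply Csum_map_ext_in; intros; ring.
Qed.

Lemma sconst_add c d : sconst (Cadd c d) = sadd (sconst c) (sconst d).
Proof. apply functional_extensionality; intro a. unfold sconst, sscale, sadd. ring. Qed.

Lemma sconst_mul c d : sconst (Cmul c d) = smul (sconst c) (sconst d).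
Proof.
  rewrite <- sscale_sconst. apply functional_extensionality; intro a.
  unfold sconst, sscale. ring.
Qed.

Lemma sconst_0 : sconst C0 = szero.
Proof. apply functional_extensionality; intro a. unfold sconst, sscale, szero. ring. Qed.

Lemma smul_seq_eq n f f' g g' :
  seq_eq n f f' -> seq_eq n g g' -> seq_eq n (smul f g) (smul f' g').
Proof.
  intros Hf Hg a Ha. unfold smul. apply Csum_map_ext_in. intros b Hb.
  destruct (boxes_length_in a b Hb). rewrite Hf, Hg; auto; congruence.
Qed.

Section Ideal.
Variables (n : nat) (G : list series).

Definition ideal_comb (hs : list series) : series :=
  fold_right sadd szero (map (fun p => smul (fst p) (snd p)) (combine hs G)).

Lemma in_ideal_eq g g' : g = g' -> in_ideal n G g -> in_ideal n G g'.
Proof. intros ->; auto. Qed.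

Lemma in_ideal_zero : in_ideal n G szero.
Proof.
  exists (repeat szero (length G)). rewrite repeat_length. repeat split.
  - apply Forall_forall. intros x Hx. apply repeat_spec in Hx; subst. apply convergent_zero.
  - fold (ideal_comb (repeat szero (length G))).
    replace (ideal_comb (repeat szero (length G))) with szero; [intros a _; reflexivity|].
    unfold ideal_comb. induction G as [|g G' IH]; simpl; auto. rewrite <- IH. ring.
Qed.

Lemma ideal_comb_add hs1 hs2 :
  length hs1 = length G -> length hs2 = length G ->
  ideal_comb (map (fun p => sadd (fst p) (snd p)) (combine hs1 hs2))
  = sadd (ideal_comb hs1) (ideal_comb hs2).
Proof.
  unfold ideal_comb. revert hs1 hs2.
  induction G as [|g G' IH]; intros [|h1 hs1] [|h2 hs2]; simpl; intros L1 L2; try discriminate.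
  - ring.
  - injection L1 as L1; injection L2 as L2. rewrite (IH hs1 hs2 L1 L2). ring.
Qed.

Lemma ideal_comb_mul h hs : ideal_comb (map (smul h) hs) = smul h (ideal_comb hs).
Proof.
  unfold ideal_comb. revert hs.
  induction G as [|g G' IH]; intros [|h1 hs]; simpl; try ring. rewrite IH. ring.
Qed.

Lemma in_ideal_add g1 g2 : in_ideal n G g1 -> in_ideal n G g2 -> in_ideal n G (sadd g1 g2).
Proof.
  intros [hs1 [L1 [F1 H1]]] [hs2 [L2 [F2 H2]]].
  exists (map (fun p => sadd (fst p) (snd p)) (combine hs1 hs2)). repeat split.
  - rewrite length_map, length_combine. lia.
  - clear -F1 F2. revert hs2 F2; induction F1; intros [|h2 hs2] F2; simpl; auto.
    inversion F2; subst. constructor; auto. apply convergent_add; auto.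
  - fold (ideal_comb (map (fun p => sadd (fst p) (snd p)) (combine hs1 hs2))).
    rewrite ideal_comb_add by auto. intros a Ha. unfold sadd. rewrite H1, H2; auto.
Qed.

Lemma in_ideal_mul h g : convergent n h -> in_ideal n G g -> in_ideal n G (smul h g).
Proof.
  intros Ch [hs [L [F H]]]. exists (map (smul h) hs). repeat split.
  - rewrite length_map; auto.
  - apply Forall_map. eapply Forall_impl; [|exact F]. intros; apply convergent_mul; auto.
  - fold (ideal_comb (map (smul h) hs)). rewrite ideal_comb_mul.
    apply smul_seq_eq; auto. intros a _; reflexivity.
Qed.

Lemma in_ideal_scale c g : in_ideal n G g -> in_ideal n G (sscale c g).
Proof.
  intro H. rewrite sscale_sconst. apply in_ideal_mul; auto.
  apply convergent_scale, convergent_one.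
Qed.

End Ideal.

Lemma in_ideal_cons n f J g :
  in_ideal n (f :: J) g -> exists h, convergent n h /\ in_ideal n J (ssub g (smul h f)).
Proof.
  intros [[|h hs] [L [F H]]]; [discriminate|].
  inversion F; subst. injection L as L.
  exists h; split; auto. exists hs; repeat split; auto.
  intros a Ha. simpl in H. unfold ssub, sadd at 1. rewrite (H a Ha).
  unfold sadd at 1, sopp. ring.
Qed.

(* A row [nat -> C] is a coordinate vector; [row_comb c rows = sum_i c_i rows_i]. *)
Definition row_comb (c : list C) (rows : list (nat -> C)) (j : nat) : C :=
  Csum (map (fun p => Cmul (fst p) (snd p j)) (combine c rows)).

Lemma row_comb_app c1 c2 r1 r2 j : length c1 = length r1 ->
  row_comb (c1 ++ c2) (r1 ++ r2) j = Cadd (row_comb c1 r1 j) (row_comb c2 r2 j).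
Proof.
  revert r1; induction c1; intros [|r r1] L; simpl in *; try discriminate.
  - unfold row_comb; simpl. ring.
  - injection L as L. unfold row_comb in *; simpl. rewrite IHc1 by auto. ring.
Qed.

Lemma row_comb_zero_column c rows j :
  (forall r, In r rows -> r j = C0) -> row_comb c rows j = C0.
Proof.
  intro H. apply Csum_map_zero. intros [x r] Hx. simpl.
  apply in_combine_r in Hx. rewrite H by auto. ring.
Qed.

Lemma row_comb_shift c R j : row_comb c (map (fun s j => s (S j)) R) j = row_comb c R (S j).
Proof.
  revert R; induction c; intros [|s R]; unfold row_comb in *; simpl; try ring.
  rewrite IHc. ring.
Qed.

(* Clear column [0] of [R] using the pivot row [r], then drop that column. *)
Definition pivot_rows (r : nat -> C) (R : list (nat -> C)) : list (nat -> C) :=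
  map (fun s j => Cadd (s (S j)) (Cmul (Cmul (s 0%nat) (Copp (Cinv (r 0%nat)))) (r (S j)))) R.

Lemma row_comb_pivot_rows c r R j :
  row_comb c (pivot_rows r R) j =
  Cadd (row_comb c R (S j)) (Cmul (Cmul (row_comb c R 0%nat) (Copp (Cinv (r 0%nat)))) (r (S j))).
Proof.
  revert R; induction c; intros [|s R]; unfold row_comb, pivot_rows in *; simpl; try ring.
  rewrite IHc. ring.
Qed.

Definition nonzero (c : list C) : Prop := ~ Forall (fun x => x = C0) c.

(* A relation among the pivoted rows lifts, with coefficient [(c . R)_0 / -r_0] on [r]. *)
Lemma pivot_rows_relation m R1 r R2 c1 c2 :
  r 0%nat <> C0 -> length c1 = length R1 -> nonzero (c1 ++ c2) ->
  (forall j, (j < m)%nat -> row_comb (c1 ++ c2) (pivot_rows r (R1 ++ R2)) j = C0) ->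
  exists c0, nonzero (c1 ++ c0 :: c2) /\
    forall j, (j < S m)%nat -> row_comb (c1 ++ c0 :: c2) (R1 ++ r :: R2) j = C0.
Proof.
  intros Hr L1 Nc Dc.
  set (c := c1 ++ c2) in *.
  exists (Cmul (row_comb c (R1 ++ R2) 0%nat) (Copp (Cinv (r 0%nat)))). split.
  - intro F. apply Nc. apply Forall_app in F as [F1 F2]. inversion F2; subst.
    apply Forall_app; auto.
  - intros j Hj.
    assert (Hc : forall c0, row_comb (c1 ++ c0 :: c2) (R1 ++ r :: R2) j
                            = Cadd (Cmul c0 (r j)) (row_comb c (R1 ++ R2) j)).
    { intro c0. unfold c. rewrite !row_comb_app by auto.
      unfold row_comb at 2; simpl. fold (row_comb c2 R2 j). ring. }
    rewrite Hc. destruct j as [|j].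
    + transitivity (Cadd (Copp (Cmul (row_comb c (R1 ++ R2) 0%nat)
                                     (Cmul (Cinv (r 0%nat)) (r 0%nat))))
                         (row_comb c (R1 ++ R2) 0%nat)); [ring|].
      rewrite Cinv_l by auto. ring.
    + specialize (Dc j ltac:(lia)). rewrite row_comb_pivot_rows in Dc. rewrite <- Dc. ring.
Qed.

Lemma rows_dependent m (rows : list (nat -> C)) :
  (m < length rows)%nat ->
  exists c, length c = length rows /\ nonzero c /\
    forall j, (j < m)%nat -> row_comb c rows j = C0.
Proof.
  revert rows; induction m as [|m IH]; intros rows Hl.
  - exists (C1 :: repeat C0 (length rows - 1)). split; [simpl; rewrite repeat_length; lia|].
    split; [|intros; lia]. intro F; inversion F; apply C1_neq_C0; auto.
  - destruct (classic (exists r, In r rows /\ r 0%nat <> C0)) as [[r [Hr Hr0]] | Hno].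
    + apply in_split in Hr as [R1 [R2 ->]].
      destruct (IH (pivot_rows r (R1 ++ R2))) as [c [Lc [Nc Dc]]].
      { unfold pivot_rows. rewrite length_map, length_app. rewrite length_app in Hl. simpl in Hl. lia. }
      unfold pivot_rows in Lc. rewrite length_map, length_app in Lc.
      rewrite <- (firstn_skipn (length R1) c) in Nc, Dc.
      destruct (pivot_rows_relation m R1 r R2 (firstn (length R1) c) (skipn (length R1) c))
        as [c0 [Nc' Dc']]; auto.
      { rewrite length_firstn. lia. }
      eexists; split; [|split; [exact Nc' | exact Dc']].
      rewrite !length_app; simpl; rewrite length_firstn, length_skipn. lia.
    + destruct (IH (map (fun s j => s (S j)) rows)) as [c [Lc [Nc Dc]]].
      { rewrite length_map. lia. }
      rewrite length_map in Lc. exists c. split; auto. split; auto.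
      intros [|j] Hj.
      * apply row_comb_zero_column. intros r Hr. apply NNPP. intro Hr0. apply Hno; eauto.
      * rewrite <- row_comb_shift. apply Dc. lia.
Qed.

Lemma lincomb_map_add {A} (l : list A) W a b :
  lincomb (map (fun j => Cadd (a j) (b j)) l) W = sadd (lincomb (map a l) W) (lincomb (map b l) W).
Proof.
  revert W; induction l; intros [|w W]; unfold lincomb in *; simpl; try ring.
  rewrite IHl, !sscale_sconst, sconst_add. ring.
Qed.

Lemma lincomb_map_scale {A} (l : list A) W k a :
  lincomb (map (fun j => Cmul k (a j)) l) W = smul (sconst k) (lincomb (map a l) W).
Proof.
  revert W; induction l; intros [|w W]; unfold lincomb in *; simpl; try ring.
  rewrite IHl, !sscale_sconst, sconst_mul. ring.
Qed.

Lemma lincomb_map_zero {A} (l : list A) W : lincomb (map (fun _ => C0) l) W = szero.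
Proof.
  revert W; induction l; intros [|w W]; unfold lincomb in *; simpl; try ring.
  rewrite IHl, !sscale_sconst, sconst_0. ring.
Qed.

Lemma lincomb_app cs1 cs2 W1 W2 : length cs1 = length W1 ->
  lincomb (cs1 ++ cs2) (W1 ++ W2) = sadd (lincomb cs1 W1) (lincomb cs2 W2).
Proof.
  revert W1; induction cs1; intros [|w W1] L; simpl in *; try discriminate.
  - unfold lincomb; simpl. ring.
  - injection L as L. unfold lincomb in *; simpl. rewrite IHcs1 by auto. ring.
Qed.

Lemma lincomb_smul p cs ts : lincomb cs (map (smul p) ts) = smul p (lincomb cs ts).
Proof.
  revert ts; induction cs; intros [|t ts]; unfold lincomb in *; simpl; try ring.
  rewrite IHcs, !sscale_sconst. ring.
Qed.

Definition lincomb_row (W : list series) (r : nat -> C) : series :=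
  lincomb (map r (seq 0 (length W))) W.

Lemma lincomb_row_nth cs W : length cs = length W ->
  lincomb cs W = lincomb_row W (fun j => nth j cs C0).
Proof.
  intro L. unfold lincomb_row. rewrite <- L. f_equal.
  clear. induction cs; simpl; auto. f_equal. rewrite <- seq_shift, map_map. exact IHcs.
Qed.

Lemma lincomb_row_comb W c rows : length c = length rows ->
  lincomb c (map (lincomb_row W) rows) = lincomb_row W (row_comb c rows).
Proof.
  revert rows; induction c as [|c0 c IH]; intros [|r rows] L; try discriminate.
  - symmetry. apply lincomb_map_zero.
  - injection L as L.
    change (lincomb (c0 :: c) (map (lincomb_row W) (r :: rows)))
      with (sadd (sscale c0 (lincomb_row W r)) (lincomb c (map (lincomb_row W) rows))).
    change (row_comb (c0 :: c) (r :: rows))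
      with (fun j => Cadd (Cmul c0 (r j)) (row_comb c rows j)).
    rewrite IH by auto. unfold lincomb_row.
    rewrite (lincomb_map_add _ W (fun j => Cmul c0 (r j))), lincomb_map_scale, sscale_sconst.
    reflexivity.
Qed.

Definition spans_mod (n : nat) (G ts : list series) : Prop :=
  forall g, convergent n g ->
    exists cs, length cs = length ts /\ in_ideal n G (ssub g (lincomb cs ts)).

Definition independent_mod (n : nat) (G es : list series) : Prop :=
  forall cs, length cs = length es -> in_ideal n G (lincomb cs es) -> Forall (fun c => c = C0) cs.

Section Spanning.
Variables (n : nat) (J : list series).

Lemma coordinates_mod W es : spans_mod n J W -> Forall (convergent n) es ->
  exists rows, length rows = length es /\
    Forall2 (fun e r => in_ideal n J (ssub e (lincomb_row W r))) es rows.
Proof.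
  intros Sp F. induction F as [|e es Ce _ [rows [L F2]]]; [exists []; auto|].
  destruct (Sp e Ce) as [cs [Lcs He]].
  exists ((fun j => nth j cs C0) :: rows). split; [simpl; auto|].
  constructor; auto. rewrite <- lincomb_row_nth; auto.
Qed.

Lemma in_ideal_lincomb_rows W es rows :
  Forall2 (fun e r => in_ideal n J (ssub e (lincomb_row W r))) es rows ->
  forall c, length c = length es ->
  in_ideal n J (ssub (lincomb c es) (lincomb c (map (lincomb_row W) rows))).
Proof.
  induction 1 as [|e r es rows He _ IH]; intros [|c0 c] L; simpl in *; try discriminate.
  - apply (in_ideal_eq n J szero); [unfold lincomb; simpl; ring | apply in_ideal_zero].
  - injection L as L.
    apply (in_ideal_eq n J (sadd (sscale c0 (ssub e (lincomb_row W r)))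
                                 (ssub (lincomb c es) (lincomb c (map (lincomb_row W) rows))))).
    + unfold lincomb; simpl. rewrite !sscale_sconst. unfold ssub. ring.
    + apply in_ideal_add; auto. apply in_ideal_scale; auto.
Qed.

(* Steinitz: the coordinate rows of more than [length W] elements are dependent. *)
Lemma independent_mod_length_le W es :
  spans_mod n J W -> Forall (convergent n) es -> independent_mod n J es -> (length es <= length W)%nat.
Proof.
  intros Sp Ces Ind.
  destruct (coordinates_mod W es Sp Ces) as [rows [Lr Hrows]].
  destruct (Nat.le_gt_cases (length es) (length W)) as [Hle|Hgt]; auto. exfalso.
  destruct (rows_dependent (length W) rows) as [c [Lc [Nc Dc]]]; [lia|].
  apply Nc, Ind; [lia|].
  pose proof (in_ideal_lincomb_rows W es rows Hrows c ltac:(lia)) as Hc.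
  rewrite lincomb_row_comb in Hc by auto. unfold lincomb_row in Hc.
  rewrite (map_ext_in _ (fun _ => C0)), lincomb_map_zero in Hc.
  2:{ intros j Hj. apply in_seq in Hj. apply Dc. lia. }
  revert Hc. apply in_ideal_eq. unfold ssub. ring.
Qed.

Definition pow_multiples (f : series) (ts : list series) (k : nat) : list series :=
  flat_map (fun l => map (smul (spow f l)) ts) (seq 0 k).

Lemma pow_multiples_S f ts k :
  pow_multiples f ts (S k) = pow_multiples f ts k ++ map (smul (spow f k)) ts.
Proof. unfold pow_multiples. rewrite seq_S, flat_map_app. simpl. rewrite app_nil_r. reflexivity. Qed.

Lemma pow_multiples_length f ts k : length (pow_multiples f ts k) = (k * length ts)%nat.
Proof. induction k; [reflexivity|]. rewrite pow_multiples_S, length_app, length_map, IHk. lia. Qed.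

Lemma spans_mod_cons_pow f ts k g :
  convergent n f -> spans_mod n (f :: J) ts -> convergent n g ->
  exists cs h, length cs = length (pow_multiples f ts k) /\ convergent n h /\
    in_ideal n J (ssub (ssub g (lincomb cs (pow_multiples f ts k))) (smul (spow f k) h)).
Proof.
  intros Cf Sp Cg. induction k as [|k IH].
  - exists [], g. split; [reflexivity|]. split; auto.
    apply (in_ideal_eq n J szero); [|apply in_ideal_zero].
    unfold pow_multiples, lincomb; simpl. ring.
  - destruct IH as [cs [h [Lcs [Ch Hh]]]].
    destruct (Sp h Ch) as [c [Lc Hc]].
    destruct (in_ideal_cons n f J _ Hc) as [h' [Ch' Hh']].
    exists (cs ++ c), h'. split; [rewrite pow_multiples_S, !length_app, length_map; lia|].
    split; auto.
    apply (in_ideal_eq n J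
      (sadd (ssub (ssub g (lincomb cs (pow_multiples f ts k))) (smul (spow f k) h))
            (smul (spow f k) (ssub (ssub h (lincomb c ts)) (smul h' f))))).
    + rewrite pow_multiples_S, lincomb_app, lincomb_smul by auto. simpl spow. unfold ssub. ring.
    + apply in_ideal_add; auto. apply in_ideal_mul; auto. apply convergent_pow; auto.
Qed.

Lemma spans_mod_pow_multiples f ts k :
  convergent n f -> spans_mod n (f :: J) ts -> in_ideal n J (spow f k) ->
  spans_mod n J (pow_multiples f ts k).
Proof.
  intros Cf Sp Hk g Cg.
  destruct (spans_mod_cons_pow f ts k g Cf Sp Cg) as [cs [h [L [Ch Hg]]]].
  exists cs; split; auto.
  apply (in_ideal_eq n J (sadd (ssub (ssub g (lincomb cs (pow_multiples f ts k)))
                                     (smul (spow f k) h))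
                               (smul h (spow f k)))).
  - unfold ssub. ring.
  - apply in_ideal_add; auto. apply in_ideal_mul; auto.
Qed.

Lemma quot_dim_le_mul_of_pow f k mu tau :
  convergent n f -> in_ideal n J (spow f k) ->
  quot_dim n J mu -> quot_dim n (f :: J) tau -> (mu <= k * tau)%nat.
Proof.
  intros Cf Hk [es [Les [Ces [_ Ind]]]] [ts [Lts [_ [Sp _]]]].
  rewrite <- Les, <- Lts, <- (pow_multiples_length f ts k).
  apply independent_mod_length_le; auto.
  - apply spans_mod_pow_multiples; auto.
    intros g Cg. destruct (Sp g Cg) as [cs [L Hg]]. exists cs; split; [lia | exact Hg].
  - intros cs L. apply Ind. lia.
Qed.

End Spanning.

(* Division by [INR 0] yields [0] in Rocq, so the hypothesis also excludes [tau = 0]. *)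
Lemma nat_mul_lt_of_INR_div_gt mu tau k :
  INR mu / INR tau > INR k -> (k * tau < mu)%nat.
Proof.
  intro H. destruct tau as [|tau].
  - exfalso. unfold Rdiv in H. simpl in H. rewrite Rinv_0, Rmult_0_r in H.
    pose proof (pos_INR k). lra.
  - apply INR_lt. rewrite mult_INR.
    assert (Ht : 0 < INR (S tau)) by (apply lt_0_INR; lia).
    apply (Rmult_gt_compat_r (INR (S tau))) in H; auto.
    unfold Rdiv in H. rewrite Rmult_assoc, Rinv_l, Rmult_1_r in H by lra. lra.
Qed.

Theorem mainTheorem3 (n : nat) (f : series) (mu tau : nat) :
  (2 <= n)%nat ->
  convergent n f ->
  f (repeat 0%nat n) = C0 ->
  isolated_critical_point n f ->
  milnor_number n f mu ->
  tjurina_number n f tau ->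
  (INR mu / INR tau > INR (n - 1))%R ->
  ~ in_ideal n (jacobian_gens n f) (spow f (n - 1)).
Proof.
  intros _ Cf _ _ Hmu Htau Hratio Hpow.
  pose proof (quot_dim_le_mul_of_pow n (jacobian_gens n f) f (n - 1) mu tau Cf Hpow Hmu Htau).
  pose proof (nat_mul_lt_of_INR_div_gt mu tau (n - 1) Hratio).
  lia.
Qed.
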